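(* Let $N\ge 2$ and $m\ge 1$ be integers, and let $\omega_N$ denote a primitive $N$th root of unity (not needed below, fixed only for definiteness). Suppose the quantum block code $$|k\rangle\longmapsto |k_{\rm encode}\rangle=\sum_{i_1,\dots,i_m\in\mathbb Z_N} a^{(k)}_{i_1,\dots,i_m}\,|i_1,\dots,i_m\rangle,\qquad k\in\mathbb Z_N,$$ which encodes one $N$-state register into $m$ $N$-state registers, corrects the set $E$ of errors (operators on $m$ registers). Let $\mu=(\mu_{ip})_{i,p\ge 1}$ be an integer matrix each of whose rows has only finitely many nonzero entries, such that the map $\mathbb Z_N^{\mathbb Z^+}\to\mathbb Z_N^{\mathbb Z^+}$, $\mathbf k=(k_p)_{p\ge1}\mapsto\big(\sum_p\mu_{ip}k_p \bmod N\big)_{i\ge 1}$ is invertible. Define the encoding of basis states $|\mathbf k\rangle=|k_1,k_2,\dots\rangle$ ($k_p\in\mathbb Z_N$) by $$|\mathbf k\rangle\longmapsto|\mathbf k_{\rm encode}\rangle=\bigotimes_{i=1}^{+\infty}\Big[\sum_{j_{i1},\dots,j_{im}} a^{(\sum_p\mu_{ip}k_p \bmod N)}_{j_{i1},\dots,j_{im}}\,|j_{i1},\dots,j_{im}\rangle\Big],$$ i.e. the $i$-th block of $m$ output registers carries the block-encoding of $\sum_p\mu_{ip}k_p \bmod N$. Then this encoding is a quantum convolutional code of rate $1/m$ which corrects the error set $E\otimes E\otimes\cdots=\{\mathcal E_1\otimes\mathcal E_2\otimes\cdots:\mathcal E_i\in E\}$, where $\mathcal E_i$ acts on the $i$-th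 block of $m$ output registers.
   Context: Each quantum register is an $N$-state system with orthonormal computational basis $|0\rangle,\dots,|N-1\rangle$, labelled by $\mathbb Z_N$; states of (possibly infinitely many) registers are spanned by orthonormal basis states $|k_1,k_2,\dots\rangle$. An encoding is a linear map defined on computational basis states of the input registers, $|\mathbf k\rangle\mapsto|\mathbf k_{\rm encode}\rangle$. An encoding corrects (handles) a set $E$ of error operators if for all $\mathcal A,\mathcal B\in E$ and all input basis labels $\mathbf i,\mathbf j$ one has $\langle \mathbf i_{\rm encode}|\mathcal A^\dagger\mathcal B|\mathbf j_{\rm encode}\rangle=\Lambda_{\mathcal A,\mathcal B}\,\delta_{\mathbf i\mathbf j}$ for a complex constant $\Lambda_{\mathcal A,\mathcal B}$ independent of $\mathbf i,\mathbf j$. The rate of a code is the number of input registers divided by the number of output registers (per block). *)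

From HB Require Import structures.
From mathcomp Require Import all_boot all_order all_algebra.
From mathcomp Require Import complex.
From mathcomp Require Import boolp reals.
Set Implicit Arguments. Unset Strict Implicit. Unset Printing Implicit Defensive.
Import Order.TTheory GRing.Theory Num.Theory.
Local Open Scope ring_scope.

(* Computational basis labels of a block of m N-state registers:
   a label i_1..i_m is a finite function 'I_m -> 'Z_N.  (Use with 1 < N.) *)
Definition blockLabel (N m : nat) := {ffun 'I_m -> 'Z_N}.

Definition blockVec (R : realType) (N m : nat) := blockLabel N m -> R[i].

(* An operator on a block of m registers, given by its matrix entries
   A x y = <x|A|y>. *)
Definition blockOp (R : realType) (N m : nat) :=
  blockLabel N m -> blockLabel N m -> R[i].

(* <u| A^dagger B |v>  for block vectors u v and block operators A B. *)
Definition sandwich (R : realType) (N m : nat)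
    (u : blockVec R N m) (A B : blockOp R N m) (v : blockVec R N m) : R[i] :=
  \sum_(x : blockLabel N m) \sum_(y : blockLabel N m) \sum_(z : blockLabel N m)
     (u x)^* * (A z x)^* * B z y * v y.

(* The block code |k> |-> |k_encode> = sum_x a k x |x>, k in Z_N, corrects
   the error set E (Knill–Laflamme condition as in the paper). *)
Definition block_corrects (R : realType) (N m : nat)
    (a : 'Z_N -> blockVec R N m) (E : blockOp R N m -> Prop) : Prop :=
  forall A B, E A -> E B ->
  exists Lam : R[i], forall k k' : 'Z_N,
    sandwich (a k) A B (a k') = Lam * (k == k')%:R.

(* The linear map k |-> (sum_p mu_ip k_p mod N)_i on Z_N^{Z+}.  Indices start
   at 0 instead of 1.  Row i of mu is supported in p < s i, so the sum is
   finite; any such bound s gives the same map. *)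
Definition muMap (N : nat) (mu : nat -> nat -> int) (s : nat -> nat)
    (k : nat -> 'Z_N) : nat -> 'Z_N :=
  fun i => \sum_(p < s i) (mu i p)%:~R * k p.

Definition prod_cvg_to (R : realType) (u : nat -> R[i]) (l : R[i]) : Prop :=
  forall e : R, 0 < e -> exists n0 : nat, forall n : nat, (n0 <= n)%N ->
    `| \prod_(i < n) u i - l | < (e%:C)%C.

(* Infinite product: the limit of the partial products when it exists
   (the limit is unique); 0 by convention otherwise. *)
Definition infprod (R : realType) (u : nat -> R[i]) : R[i] :=
  match pselect (exists l, prod_cvg_to u l) with
  | left h => projT1 (cid h)
  | right _ => 0
  end.

(* Inner product <k_enc| (⊗_i A_i)^dagger (⊗_i B_i) |k'_enc> of two encoded
   product states of the infinite register chain: the i-th block of m output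
   registers carries the block encoding of (muMap k) i, so (as for infinite
   tensor products of product vectors) the matrix element is the infinite
   product of the blockwise matrix elements. *)
Definition conv_sandwich (R : realType) (N m : nat)
    (a : 'Z_N -> blockVec R N m) (mu : nat -> nat -> int) (s : nat -> nat)
    (k : nat -> 'Z_N) (As Bs : nat -> blockOp R N m) (k' : nat -> 'Z_N) : R[i] :=
  infprod (fun i => sandwich (a (muMap mu s k i)) (As i) (Bs i)
                             (a (muMap mu s k' i))).

Definition conv_corrects (R : realType) (N m : nat)
    (a : 'Z_N -> blockVec R N m) (mu : nat -> nat -> int) (s : nat -> nat)
    (E : blockOp R N m -> Prop) : Prop :=
  forall As Bs : nat -> blockOp R N m,
    (forall i, E (As i)) -> (forall i, E (Bs i)) ->
  exists Lam : R[i], forall k k' : nat -> 'Z_N,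
    (k = k' -> conv_sandwich a mu s k As Bs k' = Lam) /\
    (k <> k' -> conv_sandwich a mu s k As Bs k' = 0).

From HB Require Import structures.
From mathcomp Require Import all_boot all_order all_algebra.
From mathcomp Require Import complex.
From mathcomp Require Import boolp reals.
Import Order.TTheory GRing.Theory Num.Theory.
Local Open Scope ring_scope.

(* The matrix element of two encoded product states is the infinite product
   of the blockwise matrix elements, and block i contributes
   Lam_i * delta(label_i(k), label_i(k')).  For k = k' every factor is Lam_i,
   so the product is a constant independent of k.  For k <> k', injectivity
   of the mu-map gives a block whose labels differ; that factor vanishes, so
   the partial products are eventually 0 and so is the infinite product. *)

Section InfiniteProduct.

Variables (R : realType) (u : nat -> R[i]) (l : R[i]) (n0 : nat).
Hypothesis prod_stationary : forall n, (n0 <= n)%N -> \prod_(i < n) u i = l.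

Lemma prod_cvg_to_stationary : prod_cvg_to u l.
Proof.
move=> e e_gt0; exists n0 => n /prod_stationary ->.
by rewrite subrr normr0 ltcR.
Qed.

Lemma prod_cvg_to_stationary_uniq l' : prod_cvg_to u l' -> l' = l.
Proof.
move=> cvg_l'; apply: contrapT => neq_l'l.
have [e norm_e] : exists e : R, `|l - l'| = (e%:C)%C by rewrite normc_def; eexists.
have : 0 < `|l - l'| by rewrite normr_gt0 subr_eq0 eq_sym; exact/eqP.
rewrite norm_e ltcE => /andP[_ e_gt0].
have [n1 cvg_n1] := cvg_l' e e_gt0.
have := cvg_n1 (maxn n0 n1) (leq_maxr _ _).
by rewrite prod_stationary ?leq_maxl // norm_e ltxx.
Qed.

Lemma infprod_stationary : infprod u = l.
Proof.
rewrite /infprod; case: pselect => [ex_l | no_l]; last first.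
  by case: no_l; exists l; exact: prod_cvg_to_stationary.
by case: (cid ex_l) => l' /= /prod_cvg_to_stationary_uniq.
Qed.

End InfiniteProduct.

Lemma infprod_eq0 (R : realType) (u : nat -> R[i]) (i0 : nat) :
  u i0 = 0 -> infprod u = 0.
Proof.
move=> u_i0; apply: (@infprod_stationary _ _ _ i0.+1) => n lt_i0n.
by rewrite (bigD1 (Ordinal lt_i0n)) //= u_i0 mul0r.
Qed.

Lemma muMap_neq {N : nat} {mu : nat -> nat -> int} {s : nat -> nat}
    {k k' : nat -> 'Z_N} :
  injective (@muMap N mu s) -> k <> k' ->
  exists i, muMap mu s k i != muMap mu s k' i.
Proof.
move=> inj_mu neq_kk'; apply: contrapT => all_eq; apply/neq_kk'/inj_mu.
apply: funext => i; apply/eqP; apply: contrapT => neq_i.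
by apply: all_eq; exists i; apply/negP.
Qed.

Lemma block_corrects_seq {R : realType} {N m : nat}
    {a : 'Z_N -> blockVec R N m} {E : blockOp R N m -> Prop}
    {As Bs : nat -> blockOp R N m} :
  block_corrects a E -> (forall i, E (As i)) -> (forall i, E (Bs i)) ->
  exists Lam : nat -> R[i], forall i k k',
    sandwich (a k) (As i) (Bs i) (a k') = Lam i * (k == k')%:R.
Proof.
move=> code EAs EBs.
by have [Lam ?] := choice (fun i => code _ _ (EAs i) (EBs i)); exists Lam.
Qed.

Theorem theorem1 (R : realType) (N m : nat) (hN : (1 < N)%N) (hm : (0 < m)%N)
    (a : 'Z_N -> blockVec R N m) (E : blockOp R N m -> Prop)
    (mu : nat -> nat -> int) (s : nat -> nat)
    (hs : forall i p, (s i <= p)%N -> mu i p = 0)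
    (hbij : bijective (@muMap N mu s))
    (hcode : block_corrects a E) :
  conv_corrects a mu s E.
Proof.
move=> As Bs EAs EBs.
have [Lam sandwichE] := block_corrects_seq hcode EAs EBs.
exists (infprod Lam) => k k'; split => [<- | neq_kk'].
  by congr infprod; apply: funext => i; rewrite sandwichE eqxx mulr1.
have [i neq_i] := muMap_neq (bij_inj hbij) neq_kk'.
by apply: (@infprod_eq0 _ _ i); rewrite sandwichE (negbTE neq_i) mulr0.
Qed.
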